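(* Let $(\mathcal X,\rho)$ be a metric space, $\{x_i^n:1\le i\le n,\ n\ge1\}\subset\mathcal X$, and $A_n=\{x_i^n:1\le i\le n\}$ (counted with indices). Assume $\hat R_n=\frac1n\sum_{i=1}^n\delta_{x_i^n}$ converges weakly to a probability measure $R$ whose support $\mathcal Y$ satisfies $R(\mathcal Y)=1$. Then there exist subsets $B_n\subset A_n$, and $C_n=A_n\setminus B_n$, such that: (1) $\mathrm{card}(B_n)/n\to1$; (2) $\frac1{\mathrm{card}(B_n)}\sum_{x_i^n\in B_n}\delta_{x_i^n}\to R$ weakly; (3) $\sup\{\rho(x,\mathcal Y):x\in B_n\}\to0$ as $n\to\infty$. In particular $\mathrm{card}(C_n)/n\to0$. *)

From HB Require Import structures.
From mathcomp Require Import all_boot all_order all_algebra.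
From mathcomp Require Import all_classical all_reals all_analysis.
Set Implicit Arguments. Unset Strict Implicit. Unset Printing Implicit Defensive.
Import Order.TTheory GRing.Theory Num.Theory.
Import numFieldNormedType.Exports.
Local Open Scope classical_set_scope.
Local Open Scope ring_scope.

#[short(type="pointedMetricType")]
HB.structure Definition PointedMetric (K : numDomainType) :=
  { M of Pointed M & Metric K M }.

Definition borel (K : realType) (X : pointedMetricType K) :=
  g_sigma_algebraType (@open X).

Section defs.
Context {K : realType} {X : pointedMetricType K}.

Definition emp_measure (n : nat) (x : nat -> X) (S : {set 'I_n})
  : {measure set (borel X) -> \bar K} :=
  mscale (#|S|%:R^-1)%:nng
    (msum (fun k => if k \in [seq val i | i in S]
                    then (dirac (x k : borel X) : {measure set (borel X) -> \bar K})
                    else mzero) n).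

Definition weak_cvg (mu : nat -> {measure set (borel X) -> \bar K})
  (P : {measure set (borel X) -> \bar K}) : Prop :=
  forall f : X -> K, continuous f -> (exists M : K, forall x, `|f x| <= M) ->
    (fun n => (\int[mu n]_x (f x)%:E)%E) @ \oo --> (\int[P]_x (f x)%:E)%E.

Definition msupport (P : {measure set (borel X) -> \bar K}) : set X :=
  [set y | forall r : K, 0 < r -> (0 < P (ball y r : set (borel X)))%E].

Definition dist_to (x : X) (Y : set X) : K := inf [set mdist x y | y in Y].

End defs.

(* For every k, the points of A_n at distance < 1/(k+1) from the support Y
   eventually form a fraction > 1 - 1/(k+1) of A_n: the continuous cutoff
   that is 1 on Y and 0 at distance >= 1/(k+1) has P-integral 1, and its
   empirical means are bounded by that fraction.  Choosing k = J n -> oo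
   diagonally gives B_n.  Weak convergence survives because discarding a
   fraction c of the points moves the empirical mean of a function bounded
   by M by at most 2 M c. *)

From HB Require Import structures.
From mathcomp Require Import all_boot all_order all_algebra.
From mathcomp Require Import all_classical all_reals all_analysis.
From mathcomp Require Import measurable_realfun.
From mathcomp Require Import ring lra.
Import Order.TTheory GRing.Theory Num.Theory.
Import numFieldNormedType.Exports.
Local Open Scope classical_set_scope.
Local Open Scope ring_scope.

Section metric_borel.
Context {K : realType} {X : pointedMetricType K}.

Lemma mball_open (z : X) (r : K) : open (ball z r).
Proof.
rewrite openE => w; rewrite ballEmdist /= => zw.
apply: (filterS _ (nbhsx_ballx w (r - mdist z w) _)); last by rewrite subr_gt0.
move=> v; rewrite !ballEmdist /= => wv.
by rewrite (le_lt_trans (metric_triangle z w v))// -ltrBrDl.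
Qed.

Lemma lipschitz_continuous (f : X -> K) (L : K) : 0 < L ->
  (forall z w, `|f z - f w| <= L * mdist z w) -> continuous f.
Proof.
move=> L0 fL z; apply/cvgrPdist_lt => e e0.
apply: (filterS _ (nbhsx_ballx z (e / L) _)); last by rewrite divr_gt0.
move=> w; rewrite ballEmdist /= => zw.
by rewrite (le_lt_trans (fL z w))// mulrC -ltr_pdivlMr.
Qed.

Lemma open_measurable_borel (A : set X) : open A -> measurable (A : set (borel X)).
Proof. exact: sub_sigma_algebra. Qed.

Lemma continuous_measurable_borel (f : X -> K) :
  continuous f -> measurable_fun (setT : set (borel X)) f.
Proof.
move=> cf; apply: (measurability _ (RGenOpens.measurableE K)).
move=> _ [_ [a [b ->]] <-]; rewrite setTI; apply: open_measurable_borel.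
by move: cf => /continuousP; apply; exact: interval_open.
Qed.

Definition emp_mean {n} (S : {set 'I_n}) (f : X -> K) (y : nat -> X) : K :=
  #|S|%:R^-1 * \sum_(i in S) f (y (val i)).

Lemma ge0_integral_emp_measure n (y : nat -> X) (S : {set 'I_n}) (f : X -> \bar K) :
  (forall z, 0 <= f z)%E -> measurable_fun (setT : set (borel X)) f ->
  (\int[emp_measure y S]_z f z = (#|S|%:R^-1)%:E * \sum_(i in S) f (y (val i)))%E.
Proof.
move=> f0 mf; rewrite ge0_integral_mscale// ge0_integral_measure_sum//.
congr (_ * _)%E; rewrite [RHS]big_mkcond /=; apply: eq_bigr => k _.
rewrite mem_map ?mem_enum; last exact: val_inj.
case: ifP => _; last by rewrite integral_measure_zero.
by rewrite integral_dirac// diracE in_setT mul1e.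
Qed.

Lemma integral_emp_measure n (y : nat -> X) (S : {set 'I_n}) (f : X -> K) :
  measurable_fun (setT : set (borel X)) f ->
  (\int[emp_measure y S]_z (f z)%:E = (emp_mean S f y)%:E)%E.
Proof.
move=> mf; rewrite integralE.
rewrite (_ : (fun z => (f z)%:E) = EFin \o f)// funerpos funerneg.
rewrite !ge0_integral_emp_measure //; first last.
- exact/measurable_EFinP/measurable_funrpos.
- by move=> z; rewrite lee_fin funrpos_ge0.
- exact/measurable_EFinP/measurable_funrneg.
- by move=> z; rewrite lee_fin funrneg_ge0.
rewrite !sumEFin -!EFinM -EFinB -mulrBr -sumrB; congr (_ * _)%:E.
by apply: eq_bigr => i _; rewrite /= -[in RHS](funrposBneg f).
Qed.

End metric_borel.

Section distance_to_set.
Context {K : realType} {X : pointedMetricType K}.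
Variable Y : set X.
Hypothesis Y_neq0 : Y !=set0.

Lemma dist_to_ge0 z : 0 <= dist_to z Y.
Proof.
apply: lb_le_inf; first by case: Y_neq0 => y Yy; exists (mdist z y), y.
by move=> _ [y _ <-]; exact: mdist_ge0.
Qed.

Lemma dist_to_le z y : Y y -> dist_to z Y <= mdist z y.
Proof.
move=> Yy; apply: ge_inf; last by exists y.
by exists 0 => _ [w _ <-]; exact: mdist_ge0.
Qed.

Lemma dist_to_mem y : Y y -> dist_to y Y = 0.
Proof.
by move=> Yy; apply/eqP; rewrite eq_le dist_to_ge0 andbT -(mdistxx y) dist_to_le.
Qed.

Lemma dist_to_triangle z w : dist_to z Y <= dist_to w Y + mdist z w.
Proof.
rewrite -lerBlDr; apply: lb_le_inf.
  by case: Y_neq0 => y Yy; exists (mdist w y), y.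
move=> _ [y Yy <-]; rewrite lerBlDr (le_trans (dist_to_le z y Yy))//.
by rewrite addrC metric_triangle.
Qed.

Lemma dist_to_lipschitz z w : `|dist_to z Y - dist_to w Y| <= mdist z w.
Proof.
have := dist_to_triangle z w; have := dist_to_triangle w z.
by rewrite (metric_sym w z) ler_norml => h1 h2; apply/andP; split; lra.
Qed.

Definition cutoff (k : nat) (z : X) : K :=
  Num.max 0 (1 - dist_to z Y * k.+1%:R).

Lemma cutoff_ge0 k z : 0 <= cutoff k z.
Proof. by rewrite /cutoff le_max lexx. Qed.

Lemma cutoff_le1 k z : cutoff k z <= 1.
Proof.
by rewrite /cutoff ge_max ler01 /= lerBlDr lerDl mulr_ge0 ?dist_to_ge0.
Qed.

Lemma cutoff_mem k y : Y y -> cutoff k y = 1.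
Proof. by move=> Yy; rewrite /cutoff dist_to_mem// mul0r subr0 max_r// ler01. Qed.

Lemma cutoff_le_indicator k z :
  cutoff k z <= ((dist_to z Y < k.+1%:R^-1)%R : bool)%:R.
Proof.
case: ltP => h; first exact: cutoff_le1.
have h1 : 1 <= dist_to z Y * k.+1%:R.
  by rewrite -[leLHS](@mulVf _ k.+1%:R) ?pnatr_eq0// ler_pM2r.
by rewrite /cutoff ge_max lexx /= subr_le0.
Qed.

Lemma cutoff_continuous k : continuous (cutoff k).
Proof.
apply: (@lipschitz_continuous _ _ _ k.+1%:R) => // z w.
have max0_lip (a b : K) : `|Num.max 0 a - Num.max 0 b| <= `|a - b|.
  move: (ler_norm (a - b)) (ler_norm (b - a)); rewrite (distrC b a) => h1 h2.
  by case: (leP 0 a) => ha; case: (leP 0 b) => hb; rewrite ler_norml;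
    apply/andP; split; lra.
apply: (le_trans (max0_lip _ _)).
rewrite (_ : _ - _ = (dist_to w Y - dist_to z Y) * k.+1%:R); last by ring.
by rewrite normrM [`|k.+1%:R|]ger0_norm// mulrC distrC ler_wpM2l// dist_to_lipschitz.
Qed.

End distance_to_set.

Section support.
Context {K : realType} {X : pointedMetricType K} (P : probability (borel X) K).
Hypothesis P_msupport : P (msupport P) = 1%E.

Lemma open_msupportC : open (~` msupport P).
Proof.
set A := ~` msupport P; rewrite openE {}/A => z /= /existsNP[r /not_implyP[r0 Pr]].
apply: (filterS _ (nbhsx_ballx z (r / 2) _)); last by rewrite divr_gt0.
move=> w zw /= hw; apply: Pr.
apply: (lt_le_trans (hw (r / 2) _)); first by rewrite divr_gt0.
apply: le_measure; rewrite ?inE; try exact: open_measurable_borel (mball_open _ _).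
by move=> v wv; have := ball_triangle zw wv; rewrite -splitr.
Qed.

Lemma msupport_measurable : measurable (msupport P : set (borel X)).
Proof.
rewrite -[msupport P]setCK; apply: measurableC.
exact: open_measurable_borel open_msupportC.
Qed.

Lemma msupport_neq0 : msupport P !=set0.
Proof.
apply/set0P/negP => /eqP P0; move: P_msupport; rewrite P0 measure0 => /eqP.
by rewrite eq_sym onee_eq0.
Qed.

Lemma integral_cutoff_ge1 k : (1 <= \int[P]_z (cutoff (msupport P) k z)%:E)%E.
Proof.
have cutoff_mfun : measurable_fun (setT : set (borel X)) (EFin \o cutoff (msupport P) k).
  apply/measurable_EFinP.
  exact: continuous_measurable_borel (cutoff_continuous _ msupport_neq0 k).
have cutoff_ge0 z : setT z -> (0 <= (EFin \o cutoff (msupport P) k) z)%E.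
  by rewrite /= lee_fin cutoff_ge0.
apply: le_trans (@ge0_subset_integral _ _ _ P _ _ msupport_measurable measurableT
  _ cutoff_mfun cutoff_ge0 (@subsetT _ _)).
rewrite (_ : (\int[P]_(z in msupport P) _ =
    \int[P]_(z in msupport P) cst 1 z)%E); last first.
  apply: eq_integral => z; rewrite inE => Yz /=; rewrite cutoff_mem//; exact: msupport_neq0.
by rewrite (@integral_cst _ (borel X) _ P _ msupport_measurable) mul1e -[leLHS]P_msupport.
Qed.

End support.

Lemma norm_sum_le_card {K : realType} {I : finType} (S : {set I}) (F : I -> K) M :
  (forall i, `|F i| <= M) -> `|\sum_(i in S) F i| <= #|S|%:R * M.
Proof.
move=> FM; apply: (le_trans (ler_norm_sum _ _ _)).
by rewrite mulr_natl -sumr_const; apply: ler_sum => i _; exact: FM.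
Qed.

Lemma card_frac_le1 {K : realType} n (S : {set 'I_n}) : #|S|%:R / n%:R <= 1 :> K.
Proof.
case: n S => [|n] S; first by rewrite invr0 mulr0 ler01.
by rewrite ler_pdivrMr ?ltr0n// mul1r ler_nat -[X in (_ <= X)%N](card_ord n.+1) max_card.
Qed.

Lemma card_setC_frac {K : realType} n (S : {set 'I_n}) : (0 < n)%N ->
  #|~: S|%:R / n%:R = 1 - #|S|%:R / n%:R :> K.
Proof.
move=> n0; have nE : n%:R = #|S|%:R + #|~: S|%:R :> K.
  by rewrite -natrD cardsC card_ord.
by rewrite nE; field; rewrite -nE pnatr_eq0 -lt0n.
Qed.

Lemma sup_ge0_le {K : realType} (E : set K) (b : K) :
  0 <= b -> (forall z, E z -> 0 <= z <= b) -> 0 <= sup E <= b.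
Proof.
move=> b0 Eb; have [->|/set0P[z Ez]] := eqVneq E set0; first by rewrite sup0 lexx.
have Eub : ubound E b by move=> w /Eb /andP[].
apply/andP; split; last by apply: ge_sup => //; exists z.
by case/andP: (Eb z Ez) => z0 _; apply: le_trans z0 (ub_le_sup _ Ez); exists b.
Qed.

Lemma emp_mean_setT_sub_le {K : realType} {X : pointedMetricType K} n
    (S : {set 'I_n}) (f : X -> K) (y : nat -> X) M :
  (forall z, `|f z| <= M) ->
  `|emp_mean [set: 'I_n] f y - emp_mean S f y| <= 2 * M * (#|~: S|%:R / n%:R).
Proof.
move=> fM; have M0 : 0 <= M := le_trans (normr_ge0 _) (fM point).
rewrite /emp_mean (big_setID S) finset.setTI finset.setTD cardsT card_ord.
set m : K := #|S|%:R; set c : K := #|~: S|%:R.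
set SB := \sum_(i in S) _; set SC := \sum_(i in ~: S) _.
have nE : n%:R = m + c by rewrite -natrD cardsC card_ord.
have SBM : `|SB| <= m * M by exact: norm_sum_le_card.
have SCM : `|SC| <= c * M by exact: norm_sum_le_card.
have meanBM : `|m^-1 * SB| <= M.
  have [->|m0] := eqVneq m 0; first by rewrite invr0 mul0r normr0.
  rewrite normrM ger0_norm ?invr_ge0// ler_pdivrMl//.
  by rewrite lt_neqAle eq_sym m0 ler0n.
(* removing the [c] outer points shifts the mean by [(SC - c * meanB) / n] *)
have -> : n%:R^-1 * (SB + SC) - m^-1 * SB = n%:R^-1 * (SC - c * (m^-1 * SB)).
  have [m0|m0] := eqVneq m 0.
    have SB0 : SB = 0 by apply/normr0_eq0/eqP; rewrite eq_le normr_ge0 andbT -(mul0r M) -m0.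
    by rewrite SB0 !(mulr0, add0r, subr0).
  have m_gt0 : 0 < m by rewrite lt_neqAle eq_sym m0 ler0n.
  by rewrite nE; field; rewrite -/m -/c m0 gt_eqF// ltr_wpDr ?ler0n.
rewrite normrM ger0_norm ?invr_ge0// mulrC [leRHS]mulrA ler_wpM2r ?invr_ge0//.
apply: (le_trans (ler_normB _ _)); rewrite normrM ger0_norm ?ler0n//.
by have := ler_wpM2l (ler0n _ #|~: S|) meanBM; rewrite -/c; lra.
Qed.

Lemma bounded_integral_fin_num {K : realType} {X : pointedMetricType K}
    (P : probability (borel X) K) {f : X -> K} {M : K} :
  continuous f -> (forall z, `|f z| <= M) -> (\int[P]_z (f z)%:E)%E \is a fin_num.
Proof.
move=> cf fM; apply: integrable_fin_num => //.
apply: (@measurable_bounded_integrable _ _ _ P f setT measurableT) => //=.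
- by rewrite probability_setT ltry.
- exact: continuous_measurable_borel.
- exists M; split; first by rewrite num_real.
  by move=> N MN z _ /=; apply: le_trans (fM z) (ltW MN).
Qed.

Lemma cvg_invS_lt {K : realType} (u : nat -> K) (l : K) :
  (forall k, \forall n \near \oo, `|l - u n| < k.+1%:R^-1) -> u @ \oo --> l.
Proof.
move=> ul; apply/cvgrPdist_lt => e e0.
have [k _ /(_ k (leqnn k)) ke] := near_infty_natSinv_lt (PosNum e0).
by apply: filterS (ul k) => n /lt_trans; apply.
Qed.

(* The witness [J n] is the largest [j <= n] whose threshold is already
   passed at [n]. *)
Lemma diagonal_index (Q : nat -> nat -> Prop) :
  (forall k, \forall n \near \oo, Q k n) ->
  exists J : nat -> nat, forall k, \forall n \near \oo, (k <= J n)%N /\ Q (J n) n.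
Proof.
move=> QE; have /choice[N QN] : forall k, exists Nk, forall n, (Nk <= n)%N -> Q k n.
  by move=> k; have [Nk _ QNk] := QE k; exists Nk => n /QNk.
exists (fun n => \max_(j < n.+1 | (N j <= n)%N) (j : nat))%N => k.
exists (maxn (N 0) (maxn (N k) k)) => // n /=.
rewrite !geq_max => /and3P[N0n Nkn kn]; split.
- by rewrite -ltnS in kn; exact: (leq_bigmax_cond (Ordinal kn) Nkn).
- by apply: QN; rewrite (bigop.bigmax_eq_arg ord0) //; case: arg_maxnP.
Qed.

Section empirical_measures.
Context {K : realType} {X : pointedMetricType K} (P : probability (borel X) K).
Variable x : nat -> nat -> X.
Hypothesis emp_weak_cvg : weak_cvg (fun n => emp_measure (x n) [set: 'I_n]) P.

Lemma emp_mean_cvg {f : X -> K} {M : K} : continuous f -> (forall z, `|f z| <= M) ->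
  (fun n => emp_mean [set: 'I_n] f (x n)) @ \oo --> fine (\int[P]_z (f z)%:E)%E.
Proof.
move=> cf fM; have := emp_weak_cvg f cf (ex_intro _ M fM).
rewrite -(fineK (bounded_integral_fin_num P cf fM)).
rewrite (_ : (fun n => _) = (fun n => (emp_mean [set: 'I_n] f (x n))%:E)).
  by move/fine_cvg.
by apply/funext => n; rewrite integral_emp_measure//; exact: continuous_measurable_borel.
Qed.

Lemma weak_cvg_emp_measure_sub (B : forall n, {set 'I_n}) :
  (fun n => #|~: B n|%:R / n%:R : K) @ \oo --> 0 ->
  weak_cvg (fun n => emp_measure (x n) (B n)) P.
Proof.
move=> fracC0 f cf [M fM].
rewrite -(fineK (bounded_integral_fin_num P cf fM)).
rewrite (_ : (fun n => _) = (fun n => (emp_mean (B n) f (x n))%:E)); last first.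
  by apply/funext => n; rewrite integral_emp_measure//; exact: continuous_measurable_borel.
apply: cvg_EFin; first exact: nearW.
have shift0 : (fun n => emp_mean [set: 'I_n] f (x n) - emp_mean (B n) f (x n))
    @ \oo --> 0.
  have bound0 : (fun n => 2 * M * (#|~: B n|%:R / n%:R)) @ \oo --> 0.
    by rewrite -(mulr0 (2 * M)); exact: cvgMr.
  apply: (@squeeze_cvgr _ _ _ _ (fun n => - (2 * M * (#|~: B n|%:R / n%:R)))
    (fun n => 2 * M * (#|~: B n|%:R / n%:R))) => //.
  - by near=> n; rewrite -ler_norml emp_mean_setT_sub_le.
  - by rewrite -oppr0; exact: cvgN.
rewrite (_ : (fine \o _) = (fun n => emp_mean [set: 'I_n] f (x n) -
  (emp_mean [set: 'I_n] f (x n) - emp_mean (B n) f (x n)))); last first.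
  by apply/funext => n /=; rewrite opprB addrC subrK.
by rewrite -[fine _]subr0; apply: cvgB => //; exact: emp_mean_cvg cf fM.
Unshelve. all: by end_near.
Qed.

Definition near_msupport (k n : nat) : {set 'I_n} :=
  [set i : 'I_n | dist_to (x n i) (msupport P) < k.+1%:R^-1].

Hypothesis P_msupport : P (msupport P) = 1%E.

Lemma near_msupport_frac k :
  \forall n \near \oo, 1 - k.+1%:R^-1 < #|near_msupport k n|%:R / n%:R :> K.
Proof.
have Y0 := msupport_neq0 _ P_msupport.
have cutoff_bd z : `|cutoff (msupport P) k z| <= 1.
  by rewrite ger0_norm ?cutoff_ge0 ?cutoff_le1.
have mean_cvg := emp_mean_cvg (cutoff_continuous _ Y0 k) cutoff_bd.
have lim_ge1 : 1 <= fine (\int[P]_z (cutoff (msupport P) k z)%:E)%E.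
  rewrite -lee_fin fineK ?integral_cutoff_ge1//.
  exact: bounded_integral_fin_num (cutoff_continuous _ Y0 k) cutoff_bd.
have lt_lim : 1 - k.+1%:R^-1 < fine (\int[P]_z (cutoff (msupport P) k z)%:E)%E.
  by apply: lt_le_trans lim_ge1; rewrite ltrBlDr ltrDl invr_gt0.
apply: filterS (cvgr_gt _ mean_cvg _ lt_lim) => n /lt_le_trans; apply.
rewrite /emp_mean cardsT card_ord mulrC ler_wpM2r ?invr_ge0//.
rewrite -[#|_|%:R]/(1 *+ #|near_msupport k n|) -sumr_const.
rewrite [leRHS]big_mkcond [leLHS]big_mkcond /=.
apply: ler_sum => i _; rewrite !inE; case: ifP => near_i; first exact: cutoff_le1.
by have := cutoff_le_indicator _ Y0 k (x n i); rewrite near_i.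
Qed.

Lemma near_msupport_diagonal : exists J : nat -> nat, forall k, \forall n \near \oo,
  1 - k.+1%:R^-1 < #|near_msupport (J n) n|%:R / n%:R :> K /\
  forall i, i \in near_msupport (J n) n -> dist_to (x n i) (msupport P) < k.+1%:R^-1.
Proof.
have [J HJ] := diagonal_index _ near_msupport_frac.
have invS_le k j : (k <= j)%N -> j.+1%:R^-1 <= k.+1%:R^-1 :> K.
  by move=> kj; rewrite lef_pV2 ?posrE ?ltr0n// ler_nat ltnS.
exists J => k; apply: filterS (HJ k) => n [kJ fracJ]; split.
- by apply: le_lt_trans fracJ; rewrite lerD2l lerN2 invS_le.
- by move=> i; rewrite inE => /lt_le_trans; apply; exact: invS_le.
Qed.

End empirical_measures.

Theorem proposition3p1 (K : realType) (X : pointedMetricType K)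
  (x : nat -> nat -> X) (P : probability (borel X) K) :
  weak_cvg (fun n => emp_measure (x n) [set: 'I_n]) P ->
  P (msupport P) = 1%E ->
  exists B : forall n, {set 'I_n},
    [/\ (fun n => #|B n|%:R / n%:R : K) @ \oo --> (1 : K),
        weak_cvg (fun n => emp_measure (x n) (B n)) P,
        (fun n => sup [set dist_to (x n (val i)) (msupport P) | i in [set i | i \in B n]])
          @ \oo --> (0 : K)
      & (fun n => #|~: B n|%:R / n%:R : K) @ \oo --> (0 : K)].
Proof.
move=> emp_weak_cvg P_msupport.
have [J HJ] := near_msupport_diagonal _ _ emp_weak_cvg P_msupport.
pose B n := near_msupport P x (J n) n.
have fracB : (fun n => #|B n|%:R / n%:R : K) @ \oo --> (1 : K).
  apply: cvg_invS_lt => k; apply: filterS (HJ k) => n [+ _].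
  by rewrite ger0_norm ?subr_ge0 ?card_frac_le1// ltrBlDr addrC -ltrBlDr.
have fracC : (fun n => #|~: B n|%:R / n%:R : K) @ \oo --> (0 : K).
  rewrite -(subrr (1 : K)); apply: cvg_trans _ (cvgB (cvg_cst _) fracB).
  by apply: near_eq_cvg; exists 1%N => // n /= n0; rewrite card_setC_frac.
exists B; split => //; first exact: weak_cvg_emp_measure_sub _ _ emp_weak_cvg _ fracC.
apply: cvg_invS_lt => k; apply: filterS (HJ k.+1) => n [_ B_close].
rewrite sub0r normrN; set s := sup _.
have /andP[s_ge0 s_le] : 0 <= s <= k.+2%:R^-1.
  apply: sup_ge0_le => [|_ [i Bi <-]]; first by rewrite invr_ge0.
  by rewrite dist_to_ge0 ?ltW ?B_close//; exact: msupport_neq0 P_msupport.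
by rewrite ger0_norm// (le_lt_trans s_le)// ltf_pV2 ?posrE ?ltr0n// ltr_nat.
Qed.
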